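(* Let $\mathcal{R}$ be a finite valuation ring of order $q^r$, where $q$ is a power of an odd prime, and let $\mathcal{A}\subset\mathcal{R}$ with $|\mathcal{A}|\ge 2q^{r-1}$. For all constants $c_1,c_2>0$ there is a constant $C>0$ depending only on $c_1,c_2$ such that: (1) if $|\mathcal{A}|\ge c_1 q^{r-\frac13}$, then $\max\{|\mathcal{A}+\mathcal{A}|, |\mathcal{A}^2+\mathcal{A}^2|\}\ge C q^{\frac r2}|\mathcal{A}|^{\frac12}$; (2) if $c_1 q^{r-\frac38}\le|\mathcal{A}|\le c_2 q^{r-\frac13}$, then $\max\{|\mathcal{A}+\mathcal{A}|, |\mathcal{A}^2+\mathcal{A}^2|\}\ge C\,\dfrac{|\mathcal{A}|^2}{q^{\frac{2r-1}{2}}}$; (3) if $|\mathcal{A}+\mathcal{A}|\,|\mathcal{A}|^2\ge c_1 q^{3r-1}$ and $|\mathcal{A}|\le c_2 q^{r-\frac38}$, then $\max\{|\mathcal{A}+\mathcal{A}|, |\mathcal{A}^2+\mathcal{A}^2|\}\ge C q^{r/3}|\mathcal{A}|^{2/3}$.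
   Context: A finite valuation ring is a finite, local, principal commutative ring with identity. Its unique maximal ideal is $(z)$ for a uniformizer $z$; the residue field $\mathcal{R}/(z)$ has $q$ elements; $r$ is the smallest positive integer with $z^r=0$; then $|\mathcal{R}|=q^r$ and $|(z)|=q^{r-1}$. For $\mathcal{A}\subset\mathcal{R}$: $\mathcal{A}+\mathcal{A}=\{a+b: a,b\in\mathcal{A}\}$, $\mathcal{A}^2=\{x^2: x\in\mathcal{A}\}$, and $\mathcal{A}^2+\mathcal{A}^2=\{u+v: u,v\in\mathcal{A}^2\}$. *)

From mathcomp Require Import all_boot all_algebra.
Set Implicit Arguments. Unset Strict Implicit. Unset Printing Implicit Defensive.
Import GRing.Theory.

Section FVR.
Variable R : finComNzRingType.
Local Open Scope ring_scope.

(* An ideal: contains 0, closed under addition and under multiplication by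
   ring elements (closure under negation follows with a = -1). *)
Definition is_ideal (I : {set R}) : Prop :=
  [/\ 0 \in I,
      (forall x y, x \in I -> y \in I -> x + y \in I) &
      (forall a x, x \in I -> a * x \in I)].

Definition principal_ideal (a : R) : {set R} := [set b * a | b : R].

Definition is_maximal_ideal (M : {set R}) : Prop :=
  [/\ is_ideal M, (1 \notin M) &
      (forall J : {set R}, is_ideal J -> 1 \notin J -> M \subset J -> J = M)].

Definition is_local_ring : Prop := exists! M : {set R}, is_maximal_ideal M.

Definition is_principal_ring : Prop :=
  forall I : {set R}, is_ideal I -> exists a : R, I = principal_ideal a.

(* finite valuation ring: finite (finType), commutative with identity
   (finComNzRingType), local and principal *)
Definition finite_valuation_ring : Prop := is_local_ring /\ is_principal_ring.

Definition quotient_card (M : {set R}) : nat :=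
  #|[set [set x + m | m in M] | x : R]|.

Definition sumset (A : {set R}) : {set R} := [set a + b | a in A, b in A].
Definition sqset (A : {set R}) : {set R} := [set x ^+ 2 | x in A].

Definition nilpotency_index (z : R) (r : nat) : Prop :=
  [/\ (0 < r)%N, z ^+ r = 0 & (forall k : nat, (0 < k < r)%N -> z ^+ k != 0)].

End FVR.

Definition odd_prime_power (q : nat) : Prop :=
  exists p k : nat, [/\ prime p, odd p, (0 < k)%N & q = expn p k].

Definition large_set (T : finType) (A : {set T}) (q r : nat) : Prop :=
  (muln 2 (expn q (subn r 1)) <= #|A|)%N.

From mathcomp Require Import all_boot all_algebra.
From Stdlib Require Import Reals.
From Stdlib Require Import Lra Psatz.

Set Implicit Arguments. Unset Strict Implicit. Unset Printing Implicit Defensive.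
Open Scope R_scope.

(* The combinatorial core is an incidence count in the plane R x R.  Let P be
   the set of points (s, e) with s in A + A and e + s^2 in A^2 + A^2, so that
   |P| <= m^2 for m = max(|A + A|, |A^2 + A^2|).  For u in A and w in A \ M the
   line y = -2u x + u^2 + w^2 contains the |A| points (x + u, x^2 + w^2 - (x+u)^2),
   x in A; as 2 is invertible and squaring is two-to-one outside M, these lines
   are essentially distinct, giving |A|^2/4 lines of degree >= |A|.  Since two
   points whose abscissae differ by a unit share at most one line, the line
   degrees have small variance: sum_l (|R| deg l - |P|)^2 <= |R|^3 |P| |M|.
   Comparing the two facts yields the dichotomy
     |R| |A| <= 2 m^2   or   |A|^4 <= 16 |R| |M| m^2                      (D)
   (lemma sumset_dichotomy). *)

Lemma pow_le_reg (u v : R) (n : nat) :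
  0 <= u -> 0 <= v -> (0 < n)%nat -> u ^ n <= v ^ n -> u <= v.
Proof.
move=> hu hv n0 huv; apply: Rnot_lt_le => hvu.
have strict k : v ^ k.+1 < u ^ k.+1.
  elim: k => [|k IH]; first by rewrite /= !Rmult_1_r.
  have := pow_le v k.+1 hv; rewrite /= in IH *; nra.
by case: n n0 huv => // n _; have := strict n; lra.
Qed.

Lemma Rpower_pos (x y : R) : 0 < Rpower x y.
Proof. exact: exp_pos. Qed.

Lemma Rpower_pow_mul (x y : R) (n : nat) :
  0 < x -> Rpower x y ^ n = Rpower x (y * INR n).
Proof. by move=> hx; rewrite -Rpower_pow ?Rpower_mult //; apply: Rpower_pos. Qed.

Section RealBounds.
Variables (Q rr a s t : R).
Hypotheses (hQ : 0 < Q) (ha : 0 < a) (hs : 0 <= s).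
Local Notation X := (Rpower Q rr).
Local Notation Y := (Rpower Q (rr - 1)).
Local Notation m := (Rmax s t).

Lemma Rpower_third : Rpower Q (rr - 1/3) ^ 3 = X * X * Y.
Proof. by rewrite Rpower_pow_mul // -!Rpower_plus; congr Rpower; simpl; field. Qed.

Lemma Rpower_eighth : Rpower Q (rr - 3/8) ^ 8 = X ^ 5 * Y ^ 3.
Proof.
by rewrite !Rpower_pow_mul // -!Rpower_plus; congr Rpower; simpl; field.
Qed.

Lemma bound_large (C c1 : R) :
  0 < C -> 16 * C ^ 2 <= 1 -> 16 * C ^ 2 <= c1 ^ 3 -> 0 < c1 ->
  X * a <= 2 * m ^ 2 \/ a ^ 4 <= 16 * X * Y * m ^ 2 ->
  c1 * Rpower Q (rr - 1/3) <= a -> C * Rpower Q (rr / 2) * Rpower a (1/2) <= m.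
Proof.
move=> hC hC1 hCc1 hc1 key lo.
have hX := Rpower_pos Q rr; have hY := Rpower_pos Q (rr - 1).
have hm : 0 <= m by have := Rmax_l s t; lra.
have cube : c1 ^ 3 * (X * X * Y) <= a ^ 3.
  have h0 : 0 <= c1 * Rpower Q (rr - 1/3) by have := Rpower_pos Q (rr - 1/3); nra.
  by have := pow_incr _ _ 3 (conj h0 lo); rewrite Rpow_mult_distr Rpower_third.
have h2 : (C * Rpower Q (rr / 2) * Rpower a (1/2)) ^ 2 = C ^ 2 * X * a.
  rewrite !Rpow_mult_distr !Rpower_pow_mul //.
  have -> : rr / 2 * INR 2 = rr by simpl; field.
  have -> : 1 / 2 * INR 2 = 1 by simpl; field.
  by rewrite Rpower_1.
have hQ2 := Rpower_pos Q (rr / 2); have ha2 := Rpower_pos a (1 / 2).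
have hpos : 0 <= C * Rpower Q (rr / 2) * Rpower a (1 / 2).
  by apply: Rmult_le_pos; [apply: Rmult_le_pos|]; lra.
apply: (@pow_le_reg _ _ 2 hpos hm isT); rewrite h2. have hCX : 0 <= C ^ 2 * X * a by nra.
case: key => [k|k]; first by nra.
have hXY : 0 < X * Y by apply: Rmult_lt_0_compat.
have hXaXY : 0 <= X * a * (X * Y) by apply: Rmult_le_pos; nra.
apply: (Rmult_le_reg_r (16 * (X * Y))); first by lra.
apply: (Rle_trans _ (c1 ^ 3 * (X * X * Y) * a)).
  have -> : C ^ 2 * X * a * (16 * (X * Y)) = 16 * C ^ 2 * (X * a * (X * Y)) by ring.
  have -> : c1 ^ 3 * (X * X * Y) * a = c1 ^ 3 * (X * a * (X * Y)) by ring.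
  exact: Rmult_le_compat_r.
apply: (Rle_trans _ (a ^ 3 * a)); first by apply: Rmult_le_compat_r; lra.
rewrite (_ : a ^ 3 * a = a ^ 4); [lra | ring].
Qed.

Lemma bound_middle (C c2 : R) :
  0 < C -> 16 * C ^ 2 <= 1 -> 2 * C ^ 2 * c2 ^ 3 <= 1 -> 0 < c2 ->
  X * a <= 2 * m ^ 2 \/ a ^ 4 <= 16 * X * Y * m ^ 2 ->
  a <= c2 * Rpower Q (rr - 1/3) ->
  C * (a ^ 2 / Rpower Q ((2 * rr - 1) / 2)) <= m.
Proof.
move=> hC hC1 hCc2 hc2 key up.
have hX := Rpower_pos Q rr; have hY := Rpower_pos Q (rr - 1).
have hXY : 0 < X * Y by apply: Rmult_lt_0_compat.
have hm : 0 <= m by have := Rmax_l s t; lra.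
have hW := Rpower_pos Q ((2 * rr - 1) / 2).
have cube : a ^ 3 <= c2 ^ 3 * (X * X * Y).
  by have := pow_incr _ _ 3 (conj (Rlt_le _ _ ha) up); rewrite Rpow_mult_distr Rpower_third.
have sq : (C * (a ^ 2 / Rpower Q ((2 * rr - 1) / 2))) ^ 2 * (X * Y) = C ^ 2 * a ^ 4.
  have W2 : Rpower Q ((2 * rr - 1) / 2) ^ 2 = X * Y.
    by rewrite Rpower_pow_mul // -Rpower_plus; congr Rpower; simpl; field.
  by rewrite -W2; field; lra.
have hpos : 0 <= C * (a ^ 2 / Rpower Q ((2 * rr - 1) / 2)).
  apply: Rmult_le_pos; first lra.
  by apply: Rmult_le_pos; [apply: pow_le | apply: Rlt_le; apply: Rinv_0_lt_compat]; lra.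
apply: (@pow_le_reg _ _ 2 hpos hm isT); apply: (Rmult_le_reg_r (X * Y)) => //.
rewrite sq; have hC2 : 0 <= C ^ 2 by apply: pow_le; lra.
have hXYm : 0 <= X * Y * m ^ 2 by apply: Rmult_le_pos; [lra | apply: pow_le].
rewrite (_ : m ^ 2 * (X * Y) = X * Y * m ^ 2); last by ring.
case: key => [k|k]; last first.
  apply: (Rle_trans _ (C ^ 2 * (16 * X * Y * m ^ 2))); first exact: Rmult_le_compat_l.
  nra.
apply: (Rle_trans _ (C ^ 2 * (c2 ^ 3 * (X * Y) * (X * a)))).
  apply: Rmult_le_compat_l => //.
  rewrite (_ : a ^ 4 = a ^ 3 * a); last by ring.
  rewrite (_ : c2 ^ 3 * (X * Y) * (X * a) = c2 ^ 3 * (X * X * Y) * a); last by ring.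
  by apply: Rmult_le_compat_r; lra.
have hc23 : 0 <= C ^ 2 * c2 ^ 3 * (X * Y).
  by apply: Rmult_le_pos; [apply: Rmult_le_pos; [|apply: pow_le] |]; lra.
apply: (Rle_trans _ (2 * C ^ 2 * c2 ^ 3 * (X * Y * m ^ 2))); first by nra.
by rewrite -[X in _ <= X]Rmult_1_l; apply: Rmult_le_compat_r.
Qed.

Lemma bound_small (C c1 c2 : R) :
  0 < C -> C ^ 3 * c2 ^ 8 <= c1 ^ 3 -> 0 < c1 -> 0 < c2 ->
  c1 * Rpower Q (3 * rr - 1) <= s * a ^ 2 -> a <= c2 * Rpower Q (rr - 3/8) ->
  C * Rpower Q (rr / 3) * Rpower a (2/3) <= s.
Proof.
move=> hC hCc hc1 hc2 lo up.
have hX := Rpower_pos Q rr; have hY := Rpower_pos Q (rr - 1).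
have eighth : a ^ 8 <= c2 ^ 8 * (X ^ 5 * Y ^ 3).
  by have := pow_incr _ _ 8 (conj (Rlt_le _ _ ha) up); rewrite Rpow_mult_distr Rpower_eighth.
have cube : c1 ^ 3 * (X ^ 6 * Y ^ 3) <= s ^ 3 * a ^ 6.
  have e : Rpower Q (3 * rr - 1) = X * X * Y.
    by rewrite -!Rpower_plus; congr Rpower; ring.
  have h0 : 0 <= c1 * Rpower Q (3 * rr - 1) by have := Rpower_pos Q (3 * rr - 1); nra.
  have := pow_incr _ _ 3 (conj h0 lo); rewrite e.
  rewrite (_ : (c1 * (X * X * Y)) ^ 3 = c1 ^ 3 * (X ^ 6 * Y ^ 3)); last by ring.
  by rewrite (_ : (s * a ^ 2) ^ 3 = s ^ 3 * a ^ 6); last by ring.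
have h3 : (C * Rpower Q (rr / 3) * Rpower a (2/3)) ^ 3 = C ^ 3 * X * a ^ 2.
  rewrite !Rpow_mult_distr !Rpower_pow_mul //.
  have -> : rr / 3 * INR 3 = rr by simpl; field.
  have -> : 2 / 3 * INR 3 = INR 2 by simpl; field.
  by rewrite Rpower_pow.
have hpos : 0 <= C * Rpower Q (rr / 3) * Rpower a (2/3).
  have hQ3 := Rpower_pos Q (rr / 3); have ha3 := Rpower_pos a (2/3).
  by apply: Rmult_le_pos; [apply: Rmult_le_pos|]; lra.
apply: (@pow_le_reg _ _ 3 hpos hs isT); rewrite h3.
have ha6 : 0 < a ^ 6 * c2 ^ 8 by apply: Rmult_lt_0_compat; apply: pow_lt.
apply: (Rmult_le_reg_r _ _ _ ha6).
have hXa8 : 0 <= X * a ^ 8 by apply: Rmult_le_pos; [lra | apply: pow_le; lra].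
have hc13 : 0 <= c1 ^ 3 by apply: pow_le; lra.
apply: (Rle_trans _ (c1 ^ 3 * (X * a ^ 8))).
  rewrite (_ : C ^ 3 * X * a ^ 2 * (a ^ 6 * c2 ^ 8) = C ^ 3 * c2 ^ 8 * (X * a ^ 8)); last by ring.
  exact: Rmult_le_compat_r.
apply: (Rle_trans _ (c2 ^ 8 * (c1 ^ 3 * (X ^ 6 * Y ^ 3)))).
  rewrite (_ : c2 ^ 8 * (c1 ^ 3 * (X ^ 6 * Y ^ 3)) = c1 ^ 3 * (X * (c2 ^ 8 * (X ^ 5 * Y ^ 3)))); last by ring.
  by apply: Rmult_le_compat_l => //; apply: Rmult_le_compat_l; lra.
rewrite (_ : s ^ 3 * (a ^ 6 * c2 ^ 8) = c2 ^ 8 * (s ^ 3 * a ^ 6)); last by ring.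
by apply: Rmult_le_compat_l => //; apply: pow_le; lra.
Qed.

End RealBounds.

Section Constant.
Variables c1 c2 : R.
Hypotheses (hc1 : 0 < c1) (hc2 : 0 < c2).

Definition base_const : R := Rmin 1 (Rmin c1 (/ c2)).
Definition corollary_const : R := base_const ^ 4 / 4.

Lemma base_const_bounds :
  0 < base_const /\ base_const <= 1 /\ base_const <= c1 /\ base_const * c2 <= 1.
Proof.
have hic2 : 0 < / c2 by apply: Rinv_0_lt_compat.
have hmin := Rmin_glb_lt 1 (Rmin c1 (/ c2)) 0 Rlt_0_1 (Rmin_glb_lt _ _ _ hc1 hic2).
have hle1 := Rmin_l 1 (Rmin c1 (/ c2)); have hle2 := Rmin_r 1 (Rmin c1 (/ c2)).
have hlec1 := Rmin_l c1 (/ c2); have hleic2 := Rmin_r c1 (/ c2).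
rewrite /base_const; split; [lra | split; [lra | split; [lra|]]].
have inv : / c2 * c2 = 1 by field; lra.
have : Rmin 1 (Rmin c1 (/ c2)) * c2 <= / c2 * c2 by apply: Rmult_le_compat_r; lra.
lra.
Qed.

Lemma corollary_const_bounds :
  let C := corollary_const in
  [/\ 0 < C, 16 * C ^ 2 <= 1, 16 * C ^ 2 <= c1 ^ 3, 2 * C ^ 2 * c2 ^ 3 <= 1
    & C ^ 3 * c2 ^ 8 <= c1 ^ 3].
Proof.
move=> C; have [d0 [d1 [dc1 dc2]]] := base_const_bounds; rewrite {}/C /corollary_const.
set d := base_const in d0 d1 dc1 dc2 *.
have small n : 0 <= d ^ n <= 1.
  by split; [apply: pow_le; lra | rewrite -(pow1 n); apply: pow_incr; lra].
have smallc n : 0 <= (d * c2) ^ n <= 1.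
  have h : 0 <= d * c2 by apply: Rmult_le_pos; lra.
  by split; [apply: pow_le | rewrite -(pow1 n); apply: pow_incr]; lra.
have d3c1 : d ^ 3 <= c1 ^ 3 by apply: pow_incr; lra.
have [s5 s5'] := small 5%nat; have [s4 s4'] := small 4%nat; have [s3 s3'] := small 3%nat.
have [t3 t3'] := smallc 3%nat; have [t8 t8'] := smallc 8%nat.
split.
- by apply: Rmult_lt_0_compat; [apply: pow_lt | ]; lra.
- rewrite (_ : 16 * (d ^ 4 / 4) ^ 2 = d ^ 5 * d ^ 3); [nra | field].
- rewrite (_ : 16 * (d ^ 4 / 4) ^ 2 = d ^ 5 * d ^ 3); [nra | field].
- rewrite (_ : 2 * (d ^ 4 / 4) ^ 2 * c2 ^ 3 = d ^ 5 * (d * c2) ^ 3 / 8); [nra | field].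
- rewrite (_ : (d ^ 4 / 4) ^ 3 * c2 ^ 8 = d ^ 4 * (d * c2) ^ 8 / 64); [nra | field].
Qed.

End Constant.

(* Re-importing ssrnat restores its power notation, shadowed by Reals. *)
From mathcomp Require Import ring zify.
Import ssrnat GRing.Theory.

Lemma card_uniform_fibres (X Y : finType) (g : X -> Y) (A : {set X}) k :
  (forall x, x \in A -> #|[set y in A | g y == g x]| = k) ->
  #|A| = (#|g @: A| * k)%N.
Proof.
move=> hk; rewrite -sum1_card (partition_big_imset g) /= -sum_nat_const.
apply: eq_bigr => _ /imsetP[x xA ->].
by rewrite sum1_card -(hk x xA); apply: eq_card => y; rewrite inE.
Qed.

Lemma sum_sqr_dist (I : finType) (f : I -> nat) (c : nat) :
  (\sum_i `|f i - c| ^ 2 + 2 * c * \sum_i f i = \sum_i f i ^ 2 + #|I| * c ^ 2)%N.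
Proof.
rewrite big_distrr -!big_split /= -sum_nat_const -big_split /=.
by apply: eq_bigr => i _; rewrite mulnAC -mulnA sqrn_dist.
Qed.

Lemma sum_fibres_le (J I : finType) (D : {set J}) (g : J -> I) (F : I -> nat) k :
  (forall i, #|[set j in D | g j == i]| <= k)%N ->
  (\sum_(j in D) F (g j) <= k * \sum_i F i)%N.
Proof.
move=> hk; rewrite (partition_big g predT) //= big_distrr /=; apply: leq_sum => i _.
rewrite (eq_bigr (fun _ => F i)); last by move=> j /andP[_ /eqP->].
rewrite sum_nat_const; apply: leq_mul => //; apply: leq_trans (hk i).
by apply/eq_leq/eq_card => j; rewrite inE.
Qed.

Section Ideals.
Local Open Scope ring_scope.
Variable R : finComNzRingType.

Lemma principal_idealP (a x : R) :
  reflect (exists b, x = b * a) (x \in principal_ideal a).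
Proof. by apply: (iffP imsetP) => [[b _ ->]|[b ->]]; exists b. Qed.

Lemma principal_ideal_is_ideal (a : R) : is_ideal (principal_ideal a).
Proof.
split; first by apply/principal_idealP; exists 0; rewrite mul0r.
  move=> _ _ /principal_idealP[b ->] /principal_idealP[c ->].
  by apply/principal_idealP; exists (b + c); rewrite mulrDl.
by move=> c _ /principal_idealP[b ->]; apply/principal_idealP; exists (c * b); rewrite mulrA.
Qed.

Section IdealFacts.
Variable I : {set R}.
Hypothesis hI : is_ideal I.

Lemma ideal0 : 0 \in I. Proof. by case: hI. Qed.
Lemma idealD x y : x \in I -> y \in I -> x + y \in I.
Proof. by case: hI => _ hD _; apply: hD. Qed.
Lemma idealM a x : x \in I -> a * x \in I.
Proof. by case: hI => _ _ hM; apply: hM. Qed.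
Lemma idealB x y : x \in I -> y \in I -> x - y \in I.
Proof. by move=> xI yI; rewrite -mulN1r; apply: idealD => //; apply: idealM. Qed.

Definition coset (x : R) : {set R} := [set x + m | m in I].

Lemma coset_eq x y : (coset y == coset x) = (y - x \in I).
Proof.
apply/eqP/idP => [e|d].
  have : y \in coset x by rewrite -e; apply/imsetP; exists 0; rewrite ?ideal0 ?addr0.
  by case/imsetP => m mI ->; rewrite addrC addKr.
apply/setP => w; apply/imsetP/imsetP => -[m mI ->].
  by exists (y - x + m); [exact: idealD | ring].
by exists (m - (y - x)); [exact: idealB | ring].
Qed.

Lemma card_ideal_quotient : #|R| = (quotient_card I * #|I|)%N.
Proof.
rewrite -cardsT (card_uniform_fibres (g := coset) (A := [set: R]) (k := #|I|)).
  by congr (_ * _)%N; apply: eq_card => c; apply/imsetP/imsetP => -[x _ ->]; exists x.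
move=> x _; rewrite -(card_preimset I (can_inj (subrK x))).
by apply: eq_card => w; rewrite !inE coset_eq.
Qed.
End IdealFacts.

(* 1 - u is invertible when u is nilpotent (finite geometric series). *)
Lemma one_sub_nilpotent_inv (u : R) n :
  u ^+ n = 0 -> exists g, (1 - u) * g = 1.
Proof.
move=> un; exists (\sum_(i < n) 1 ^+ (n.-1 - i) * u ^+ i).
by rewrite -subrXX un expr1n subr0.
Qed.

(* If the maximal ideal M is nil, every element outside M is invertible:
   otherwise M + Rx would be a proper ideal strictly containing M. *)
Lemma invertible_outside (M : {set R}) :
  is_maximal_ideal M -> (forall m, m \in M -> exists n, m ^+ n = 0) ->
  forall x, x \notin M -> exists b, b * x = 1.
Proof.
move=> [Mid _ Mmax] Mnil x xM.
pose J := [set y | [exists m : R, [exists b : R, (m \in M) && (y == m + b * x)]]].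
have JP y : reflect (exists m b, m \in M /\ y = m + b * x) (y \in J).
  rewrite inE; apply: (iffP existsP) => [[m /existsP[b /andP[mM /eqP->]]]|[m [b [mM ->]]]].
    by exists m, b.
  by exists m; apply/existsP; exists b; rewrite mM eqxx.
have Jid : is_ideal J.
  split.
  - by apply/JP; exists 0, 0; rewrite ideal0 // mul0r addr0.
  - move=> _ _ /JP[m1 [b1 [m1M ->]]] /JP[m2 [b2 [m2M ->]]].
    by apply/JP; exists (m1 + m2), (b1 + b2); split; [exact: idealD | ring].
  - move=> a _ /JP[m [b [mM ->]]].
    by apply/JP; exists (a * m), (a * b); split; [exact: idealM | ring].
have MJ : M \subset J.
  by apply/subsetP => m mM; apply/JP; exists m, 0; rewrite mul0r addr0.
have [/JP[m [b [mM e1]]] | n1J] := boolP (1 \in J); last first.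
  case/negP: xM; rewrite -(Mmax J Jid n1J MJ).
  by apply/JP; exists 0, 1; rewrite ideal0 // mul1r add0r.
have [n mn] := Mnil m mM.
have [g hg] := one_sub_nilpotent_inv mn.
by exists (g * b); rewrite -hg e1; ring.
Qed.

(* |R| w = 0 for every w, because translation by w permutes R. *)
Lemma mulrn_card (w : R) : w *+ #|R| = 0.
Proof.
have e : \sum_(y : R) y = \sum_(y : R) (y + w) := reindex_inj (addIr w).
move: e; rewrite big_split /= sumr_const -{1}[\sum_y y]addr0.
by move/addrI.
Qed.

(* In a ring of odd order, 2 is invertible (doubling is injective). *)
Lemma half_exists : odd #|R| -> exists h : R, h + h = 1.
Proof.
move=> oR; have inj : injective (fun x : R => x + x).
  move=> x y /= e; apply/eqP; rewrite -subr_eq0; apply/eqP.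
  have w2 : (x - y) + (x - y) = 0 by rewrite addrACA -opprD e subrr.
  have := mulrn_card (x - y); rewrite -(odd_double_half #|R|) oR mulrSr.
  by rewrite -mul2n mulrnA mulr2n w2 mul0rn add0r.
by have [g _ gK] := injF_bij inj; exists (g 1); apply: gK.
Qed.

End Ideals.

(* Cardinalities in a local ring with nilpotent principal maximal ideal (z):
   the chain R = (z^0) > (z^1) > ... > (z^r) = 0 has all quotients of size q. *)
Section ValuationCounts.
Local Open Scope ring_scope.
Variable R : finComNzRingType.
Variables (z : R) (r : nat).
Hypotheses (Mmax : is_maximal_ideal (principal_ideal z)) (Hnil : nilpotency_index z r).
Local Notation M := (principal_ideal z).
Local Notation q := (quotient_card M).
Local Notation Z k := (principal_ideal (z ^+ k)).

Lemma maximal_ideal_nil m : m \in M -> exists n, m ^+ n = 0.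
Proof.
case: Hnil => _ zr _ /principal_idealP[b ->].
by exists r; rewrite exprMn zr mulr0.
Qed.

Lemma invertible_outside_maximal : forall x, x \notin M -> exists b, b * x = 1.
Proof. exact: (invertible_outside Mmax maximal_ideal_nil). Qed.

Lemma pow_neq0 k : (k < r)%N -> z ^+ k != 0.
Proof.
case: Hnil => _ _ hk; case: k => [|k] kr; first by rewrite expr0 oner_neq0.
by apply: hk; rewrite kr.
Qed.

Lemma mul_pow_mem k d : (k < r)%N -> (d * z ^+ k \in Z k.+1) = (d \in M).
Proof.
move=> kr; apply/idP/idP => [/principal_idealP[c e]|/principal_idealP[c ->]]; last first.
  by apply/principal_idealP; exists c; rewrite exprS; ring.
apply: contraT => dM; have [u ud] := invertible_outside_maximal dM.
have [n hn] : exists n, (u * c * z) ^+ n = 0.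
  by apply: maximal_ideal_nil; apply/principal_idealP; exists (u * c).
have [g hg] := one_sub_nilpotent_inv hn.
have zk0 : z ^+ k * (1 - u * c * z) = 0.
  have h : z ^+ k = u * c * z ^+ k.+1 by rewrite -mulrA -e mulrA ud mul1r.
  by rewrite mulrBr mulr1 {1}h exprS; ring.
by move: (pow_neq0 kr); rewrite -[z ^+ k]mulr1 -hg mulrA zk0 mul0r eqxx.
Qed.

Lemma pow_ideal_sub k : Z k.+1 \subset Z k.
Proof.
apply/subsetP => _ /principal_idealP[b ->]; apply/principal_idealP.
by exists (b * z); rewrite exprS; ring.
Qed.

(* Each quotient (z^k)/(z^(k+1)) has q elements, being isomorphic to R/(z). *)
Lemma card_pow_ideal_step k : (k < r)%N -> #|Z k| = (q * #|Z k.+1|)%N.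
Proof.
move=> kr; have Zid := principal_ideal_is_ideal (z ^+ k.+1).
rewrite (card_uniform_fibres (g := coset (Z k.+1)) (A := Z k) (k := #|Z k.+1|)); last first.
  move=> y yZ; rewrite -(card_preimset (Z k.+1) (can_inj (subrK y))).
  apply: eq_card => w; rewrite !inE coset_eq //; apply/andP/idP => [[]//|wy].
  split=> //; rewrite -(subrK y w); apply: idealD (principal_ideal_is_ideal _) _ _ _ yZ.
  exact: (subsetP (pow_ideal_sub k)).
congr (_ * _)%N.
pose g b := coset (Z k.+1) (b * z ^+ k).
have -> : coset (Z k.+1) @: Z k = g @: [set: R].
  apply/setP => c; apply/imsetP/imsetP => [[_ /principal_idealP[b ->] ->]|[b _ ->]].
    by exists b.
  by exists (b * z ^+ k) => //; apply/principal_idealP; exists b.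
have hR : #|R| = (#|g @: [set: R]| * #|M|)%N.
  rewrite -cardsT (card_uniform_fibres (g := g) (k := #|M|)) // => x _.
  rewrite -(card_preimset M (can_inj (subrK x))).
  by apply: eq_card => w; rewrite !inE /g coset_eq // -mulrBl mul_pow_mem.
have M0 : (0 < #|M|)%N.
  by apply/card_gt0P; exists 0; apply: ideal0 (principal_ideal_is_ideal z).
apply/eqP; rewrite -(eqn_pmul2r M0) -hR.
by rewrite (card_ideal_quotient (principal_ideal_is_ideal z)).
Qed.

Lemma card_pow_ideal j : (j <= r)%N -> #|Z (r - j)| = (q ^ j)%N.
Proof.
elim: j => [|j IH] jr.
  rewrite subn0 expn0; case: Hnil => _ -> _; rewrite -(cards1 (0 : R)).
  apply: eq_card => x; rewrite inE.
  by apply/principal_idealP/eqP => [[b ->]|->]; [rewrite mulr0 | exists 0; rewrite mulr0].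
have kr : (r - j.+1 < r)%N by case: Hnil => r0 _ _; rewrite ltn_subrL r0.
by rewrite card_pow_ideal_step // expnS -IH ?(ltnW jr) // -subSn // subSS.
Qed.

Lemma card_maximal_ideal : #|M| = (q ^ r.-1)%N.
Proof.
case: Hnil => r0 _ _; rewrite -card_pow_ideal ?leq_pred //.
by rewrite -subn1 subKn // expr1.
Qed.

Lemma card_ring : #|R| = (q ^ r)%N.
Proof.
rewrite -(card_pow_ideal (leqnn r)) subnn expr0 -cardsT; apply: eq_card => x.
by rewrite inE; symmetry; apply/principal_idealP; exists x; rewrite mulr1.
Qed.

End ValuationCounts.

(* Point-line incidences in the plane R x R over a finite commutative ring in
   which every element outside the set M is invertible; lines are pairs
   (slope, intercept) and P is an arbitrary set of points. *)
Section Incidences.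
Local Open Scope ring_scope.
Variable R : finComNzRingType.
Variable M : {set R}.
Hypothesis unit_outside : forall x, x \notin M -> exists b, b * x = 1.
Variable P : {set R * R}.

Definition on_line (p l : R * R) : bool := p.2 == l.1 * p.1 + l.2.
Definition line_deg (l : R * R) : nat := #|[set p in P | on_line p l]|.

Lemma sum_eq1 (c : R) (F : R -> bool) : (forall w, F w = (w == c)) ->
  (\sum_w (F w : nat) = 1)%N.
Proof.
move=> hF; rewrite (bigD1 c) //= hF eqxx big1 // => w /negbTE wc.
by rewrite hF wc.
Qed.

(* Every point lies on exactly |R| lines, one for each slope. *)
Lemma lines_through p : (\sum_l (on_line p l : nat) = #|R|)%N.
Proof.
rewrite -(pair_big predT predT (fun m w => (on_line p (m, w) : nat))) /=.
rewrite -sum1_card; apply: eq_bigr => m _.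
apply: (sum_eq1 (c := p.2 - m * p.1)) => w.
by rewrite /on_line /=; apply/eqP/eqP => [->|->]; ring.
Qed.

Lemma line_deg_sum l : line_deg l = (\sum_(p in P) (on_line p l : nat))%N.
Proof.
rewrite /line_deg -sum1_card [LHS]big_mkcond [RHS]big_mkcond /=.
by apply: eq_bigr => p _; rewrite inE; case: (p \in P); case: (on_line p l).
Qed.

Lemma sum_line_deg : (\sum_l line_deg l = #|P| * #|R|)%N.
Proof.
rewrite (eq_bigr _ (fun l _ => line_deg_sum l)) exchange_big /=.
by rewrite (eq_bigr _ (fun p _ => lines_through p)) sum_nat_const.
Qed.

Lemma common_lines_le1 p1 p2 : p2.1 - p1.1 \notin M ->
  (\sum_l (on_line p1 l && on_line p2 l : nat) <= 1)%N.
Proof.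
move=> dM; have [b hb] := unit_outside dM.
rewrite (eq_bigr (fun l => if on_line p1 l && on_line p2 l then 1 else 0)%N); last first.
  by move=> l _; case: (_ && _).
rewrite -big_mkcond sum1_card; apply/card_le1_eqP => -[m w] [m' w'].
rewrite /on_line => /andP[/eqP e1 /eqP e2] /andP[/eqP e1' /eqP e2'].
rewrite /= in e1 e2 e1' e2'.
have em : m = m'.
  have h0 : (m - m') * (p2.1 - p1.1) = 0.
    have d1 : m * (p2.1 - p1.1) = p2.2 - p1.2 by rewrite e1 e2; ring.
    have d2 : m' * (p2.1 - p1.1) = p2.2 - p1.2 by rewrite e1' e2'; ring.
    by rewrite mulrBl d1 d2 subrr.
  by apply/eqP; rewrite -subr_eq0; apply/eqP; rewrite -[_ - _]mulr1 -hb mulrCA h0 mulr0.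
by rewrite -em in e1' *; congr (_, _); apply: (@addrI _ (m * p1.1)); rewrite -e1 -e1'.
Qed.

(* The points above a fixed abscissa share exactly the lines through p1, once each. *)
Lemma common_lines_column p1 s : 
  (\sum_e \sum_l (on_line p1 l && on_line (s, e) l : nat) = #|R|)%N.
Proof.
rewrite exchange_big /= -(lines_through p1); apply: eq_bigr => l _.
case: (on_line p1 l) => /=; last by rewrite big1.
by apply: (sum_eq1 (c := l.1 * s + l.2)) => e.
Qed.
(* For a fixed p1, the lines through p1 and another point of P, counted
   with multiplicity: at most one per point with a unit abscissa difference,
   and |R| per point of each of the |M| columns p1.1 + M. *)
Lemma sum_common_lines p1 :
  (\sum_(p2 in P) \sum_l (on_line p1 l && on_line p2 l : nat)
     <= #|P| + #|M| * #|R|)%N.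
Proof.
pose near (p2 : R * R) := p2.1 - p1.1 \in M.
rewrite (bigID near) /= addnC; apply: leq_add.
  rewrite -sum1_card [X in (_ <= X)%N]big_mkcond [X in (X <= _)%N]big_mkcond /=.
  apply: leq_sum => p2 _; case: (p2 \in P); case: (boolP (near p2)) => //= farp2.
  exact: common_lines_le1.
apply: (@leq_trans (\sum_(p2 | near p2) \sum_l (on_line p1 l && on_line p2 l : nat))%N).
  rewrite [X in (_ <= X)%N]big_mkcond [X in (X <= _)%N]big_mkcond /=.
  by apply: leq_sum => p2 _; case: (p2 \in P); case: (near p2).
rewrite (eq_bigl (fun p2 : R * R => (p2.1 - p1.1 \in M) && predT p2.2)); last first.
  by move=> p2; rewrite andbT.
rewrite -(pair_big (fun s => s - p1.1 \in M) predT
  (fun s e => \sum_l (on_line p1 l && on_line (s, e) l : nat))) /=.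
rewrite (eq_bigr (fun _ => #|R|)) => [|s _]; last exact: common_lines_column.
rewrite sum_nat_const; apply/eq_leq; congr (_ * _)%N.
rewrite -(card_preimset M (can_inj (subrK p1.1))).
by apply: eq_card => w; rewrite !inE.
Qed.

(* Second moment of the line degrees, by double counting pairs of points. *)
Lemma sum_line_deg_sq :
  (\sum_l line_deg l ^ 2 <= #|P| ^ 2 + #|P| * #|M| * #|R|)%N.
Proof.
have -> : (\sum_l line_deg l ^ 2 =
   \sum_(p1 in P) \sum_(p2 in P) \sum_l (on_line p1 l && on_line p2 l : nat))%N.
  rewrite (eq_bigr (fun l => \sum_(p1 in P) \sum_(p2 in P)
                               (on_line p1 l && on_line p2 l : nat))%N).
    by rewrite exchange_big /=; apply: eq_bigr => p1 _; rewrite exchange_big.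
  move=> l _; rewrite line_deg_sum expnS expn1 big_distrl /=; apply: eq_bigr => p1 _.
  rewrite big_distrr /=; apply: eq_bigr => p2 _.
  by case: (on_line p1 l); case: (on_line p2 l).
rewrite expnS expn1 -mulnA -mulnDr -sum_nat_const; apply: leq_sum => p1 _.
exact: sum_common_lines.
Qed.

Lemma line_deg_variance :
  (\sum_l `|#|R| * line_deg l - #|P| | ^ 2 <= #|R| ^ 3 * #|P| * #|M|)%N.
Proof.
set N := #|R|; set Pn := #|P|.
have e := sum_sqr_dist (fun l => N * line_deg l)%N Pn; rewrite /= in e.
have e1 : (\sum_l (N * line_deg l) = N * (Pn * N))%N by rewrite -big_distrr sum_line_deg.
have e2 : (\sum_l (N * line_deg l) ^ 2 = N ^ 2 * \sum_l line_deg l ^ 2)%N.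
  by rewrite big_distrr; apply: eq_bigr => l _; rewrite expnMn.
rewrite e1 e2 card_prod -/N in e.
have := leq_mul (leqnn (N ^ 2)) sum_line_deg_sq; rewrite -/N -/Pn => h.
move: e h; rewrite !expnS !expn0 !muln1.
move: (\sum_l _)%N (\sum_l line_deg l ^ 2)%N => S T; nia.
Qed.
End Incidences.

Section SumSets.
Local Open Scope ring_scope.
Variable R : finComNzRingType.
Variable M : {set R}.
Hypotheses (M_ideal : is_ideal M)
           (unit_outside : forall x, x \notin M -> exists b, b * x = 1).
Variable h : R.
Hypothesis half : h + h = 1.
Variable A : {set R}.

Definition sum_points : {set R * R} :=
  [set p | (p.1 \in sumset A) && (p.2 + p.1 ^+ 2 \in sumset (sqset A))].

(* The line y = -2 u x + u^2 + w^2, which contains the |A| points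
   (x + u, x^2 + w^2 - (x + u)^2) of sum_points, x in A. *)
Definition rich_line (i : R * R) : R * R := (- (i.1 + i.1), i.1 ^+ 2 + i.2 ^+ 2).

(* (s, e) |-> (s, e + s^2) embeds the points into (A + A) x (A^2 + A^2). *)
Lemma card_sum_points : (#|sum_points| <= #|sumset A| * #|sumset (sqset A)|)%N.
Proof.
rewrite -cardsX.
apply: leq_trans (leq_imset_card (fun st : R * R => (st.1, st.2 - st.1 ^+ 2)) _).
apply: subset_leq_card; apply/subsetP => -[s e]; rewrite inE /= => /andP[sS tT].
by apply/imsetP; exists (s, e + s ^+ 2); rewrite ?inE ?sS ?tT //= addrK.
Qed.

Lemma rich_line_deg u w : u \in A -> w \in A ->
  (#|A| <= line_deg sum_points (rich_line (u, w)))%N.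
Proof.
move=> uA wA; pose g x := (x + u, x ^+ 2 + w ^+ 2 - (x + u) ^+ 2).
rewrite -(@card_in_imset _ _ g A); last by move=> x1 x2 _ _ [] /addIr.
apply: subset_leq_card; apply/subsetP => _ /imsetP[x xA ->].
have sqA v : v \in A -> v ^+ 2 \in sqset A by move=> vA; apply/imsetP; exists v.
rewrite !inE /on_line /= subrK -andbA; apply/and3P; split.
- by apply/imset2P; exists x u.
- by apply/imset2P; exists (x ^+ 2) (w ^+ 2); rewrite ?sqA.
- by apply/eqP; ring.
Qed.

(* Outside M, squaring is two-to-one: z1^2 = z2^2 forces z2 = z1 or z2 = -z1,
   since z1 - z2 and z1 + z2 cannot both lie in M (their sum 2 z1 does not). *)
Lemma sqr_eq_outside z1 z2 : z1 \notin M -> z1 ^+ 2 = z2 ^+ 2 ->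
  z2 = z1 \/ z2 = - z1.
Proof.
move=> z1M e.
have e0 : (z1 - z2) * (z1 + z2) = 0 by rewrite -[RHS](subrr (z1 ^+ 2)) {2}e; ring.
have [d1|d1] := boolP (z1 - z2 \in M); last first.
  have [b hb] := unit_outside d1; right.
  have : z1 + z2 = 0 by rewrite -[z1 + z2]mul1r -hb -mulrA e0 mulr0.
  by move=> s0; apply/eqP; rewrite -(subr_eq0 z2) opprK addrC s0.
have [d2|d2] := boolP (z1 + z2 \in M).
  case/negP: z1M; have -> : z1 = h * ((z1 - z2) + (z1 + z2)).
    by rewrite -[LHS]mul1r -half; ring.
  by apply: idealM => //; apply: idealD.
have [b hb] := unit_outside d2; left.
have : z1 - z2 = 0 by rewrite -[z1 - z2]mulr1 -hb mulrCA e0 mulr0.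
by move/eqP; rewrite subr_eq0 => /eqP.
Qed.

Lemma rich_line_fibres l :
  (#|[set i in setX A (A :\: M) | rich_line i == l]| <= 2)%N.
Proof.
case: (set_0Vmem [set i in setX A (A :\: M) | rich_line i == l]) => [->|[i0]].
  by rewrite cards0.
rewrite inE => /andP[i0D /eqP <-].
apply: leq_trans (_ : #|[set i0; (i0.1, - i0.2)]| <= 2)%N; last first.
  by rewrite cards2 ltnS leq_b1.
apply: subset_leq_card; apply/subsetP => -[u w]; rewrite !inE.
case: i0 i0D => u0 w0; rewrite !inE /= => /andP[_ /andP[w0M _]] /andP[_ /eqP[e1 e2]].
have eu : u = u0.
  by rewrite -[u]mul1r -[u0]mul1r -half !mulrDl -!mulrDr -(opprK (u + u)) e1 opprK.
rewrite {}eu in e2 *; move: e2 => /addrI /esym /(sqr_eq_outside w0M) [->|->]; by rewrite eqxx ?orbT.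
Qed.

Lemma card_outside : (2 * #|M| <= #|A|)%N -> (#|A| <= 2 * #|A :\: M|)%N.
Proof.
move=> HA; have := cardsID M A.
have : (#|A :&: M| <= #|M|)%N by apply/subset_leq_card/subsetIr.
lia.
Qed.

(* Either A + A and A^2 + A^2 carry many points of the plane, or the
   |A|^2/2 rich lines deviate too much from the average degree. *)
Lemma sumset_dichotomy : (2 * #|M| <= #|A|)%N ->
  let m := maxn #|sumset A| #|sumset (sqset A)| in
  (#|R| * #|A| <= 2 * m ^ 2)%N \/ (#|A| ^ 4 <= 16 * #|R| * #|M| * m ^ 2)%N.
Proof.
move=> HA m; set N := #|R|; set K := #|M|; set a := #|A|.
set P := sum_points; set Pn := #|P|; set D := setX A (A :\: M).
have Pm : (Pn <= m ^ 2)%N.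
  by apply: leq_trans card_sum_points _; rewrite expnS expn1 leq_mul ?leq_maxl ?leq_maxr.
have N0 : (0 < N)%N by apply/card_gt0P; exists 0.
have [dense|sparse] := leqP (2 * Pn) (N * a); last first.
  by left; apply: leq_trans (ltnW sparse) _; rewrite leq_mul2l.
right; set X := (N * a - Pn)%N.
have devD i : i \in D -> (X ^ 2 <= `|N * line_deg P (rich_line i) - Pn| ^ 2)%N.
  case: i => u w; rewrite !inE /= => /andP[uA /andP[_ wA]].
  have ha := rich_line_deg uA wA; rewrite -/P -/a in ha.
  rewrite distnEl; last by apply: leq_trans (leq_mul (leqnn N) ha); lia.
  by rewrite leq_exp2r // leq_sub2r // leq_mul2l ha orbT.
have lowD : (#|D| * X ^ 2 <= 2 * (N ^ 3 * Pn * K))%N.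
  pose dev l := (`|N * line_deg P l - Pn| ^ 2)%N.
  rewrite -sum_nat_const; apply: (@leq_trans (\sum_(i in D) dev (rich_line i))).
    exact: leq_sum devD.
  apply: leq_trans (sum_fibres_le dev rich_line_fibres) _.
  by rewrite leq_mul2l line_deg_variance.
have cardD : #|D| = (a * #|A :\: M|)%N by rewrite cardsX.
have aD := card_outside HA; rewrite -/a in aD.
have NaX : (N * a <= 2 * X)%N by rewrite /X; lia.
have : (N ^ 2 * a ^ 4 <= N ^ 2 * (16 * N * K * m ^ 2))%N.
  apply: (@leq_trans (a * (2 * #|A :\: M|) * ((2 * X) * (2 * X)))).
    rewrite (_ : N ^ 2 * a ^ 4 = a * a * ((N * a) * (N * a)))%N; last by ring.
    by apply: leq_mul; apply: leq_mul.
  apply: (@leq_trans (8 * (#|D| * X ^ 2))); first by rewrite cardD; apply/eq_leq; ring.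
  apply: (@leq_trans (8 * (2 * (N ^ 3 * m ^ 2 * K)))).
    rewrite leq_mul2l /=; apply: leq_trans lowD _.
    by rewrite leq_mul2l /=; apply: leq_mul => //; apply: leq_mul.
  by apply/eq_leq; ring.
by rewrite leq_pmul2l // expn_gt0 N0.
Qed.
End SumSets.

Lemma INR_muln (m n : nat) : INR (m * n)%N = INR m * INR n.
Proof. exact: mult_INR. Qed.

Lemma INR_expn (m n : nat) : INR (m ^ n)%N = INR m ^ n.
Proof. by elim: n => [|n IH] //; rewrite expnS INR_muln IH. Qed.

Lemma INR_leq (m n : nat) : (m <= n)%N -> INR m <= INR n.
Proof. by move/leP; apply: le_INR. Qed.

Lemma INR_maxn (m n : nat) : INR (maxn m n) = Rmax (INR m) (INR n).
Proof.
case: (leqP m n) => h; first by rewrite Rmax_right //; apply: INR_leq.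
by rewrite Rmax_left //; apply/INR_leq/ltnW.
Qed.

Lemma dichotomy_INR (N K a m : nat) :
  (N * a <= 2 * m ^ 2)%N \/ (a ^ 4 <= 16 * N * K * m ^ 2)%N ->
  INR N * INR a <= 2 * INR m ^ 2 \/ INR a ^ 4 <= 16 * INR N * INR K * INR m ^ 2.
Proof.
have I2 : INR 2 = 2 by simpl; lra.
have I16 : INR 16 = 16 by simpl; lra.
by case=> /INR_leq; rewrite !INR_muln ?I2 ?I16 => h; [left | right]; nra.
Qed.

Theorem corollary1p6 :
  forall c1 c2 : R, 0 < c1 -> 0 < c2 ->
  exists C : R, 0 < C /\
  forall (Rg : finComNzRingType) (z : Rg) (q r : nat),
    finite_valuation_ring Rg ->
    is_maximal_ideal (principal_ideal z) ->
    (* r is the smallest positive integer with z^r = 0 *)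
    nilpotency_index z r ->
    (* q = |R/(z)| is a power of an odd prime *)
    q = quotient_card (principal_ideal z) ->
    odd_prime_power q ->
    forall A : {set Rg},
      large_set A q r ->
      let a := INR #|A| in
      let s := INR #|sumset A| in
      let t := INR #|sumset (sqset A)| in
      let Q := INR q in
      let rr := INR r in
      (c1 * Rpower Q (rr - 1/3) <= a ->
         C * Rpower Q (rr / 2) * Rpower a (1/2) <= Rmax s t) /\
      (c1 * Rpower Q (rr - 3/8) <= a -> a <= c2 * Rpower Q (rr - 1/3) ->
         C * (a ^ 2 / Rpower Q ((2 * rr - 1) / 2)) <= Rmax s t) /\
      (c1 * Rpower Q (3 * rr - 1) <= s * a ^ 2 -> a <= c2 * Rpower Q (rr - 3/8) ->
         C * Rpower Q (rr / 3) * Rpower a (2/3) <= Rmax s t).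
Proof.
move=> c1 c2 hc1 hc2.
have [C0 C16 Cc1 Cc2 Cc3] := corollary_const_bounds hc1 hc2.
exists (corollary_const c1 c2); split => // Rg z q r _ Mmax Hnil Hq Hodd A HA a s t Q rr.
have hM : #|principal_ideal z| = (q ^ r.-1)%N by rewrite Hq (card_maximal_ideal Mmax Hnil).
have hR : #|Rg| = (q ^ r)%N by rewrite Hq (card_ring Mmax Hnil).
have [oq q0] : odd q /\ (0 < q)%N.
  by case: Hodd => p [k [pp op _ ->]]; rewrite oddX op orbT expn_gt0 prime_gt0.
have r0 : (0 < r)%N by case: Hnil.
have oR : odd #|Rg| by rewrite hR oddX oq orbT.
have [h half] := half_exists oR.
have HA' : (2 * #|principal_ideal z| <= #|A|)%N by rewrite hM -subn1.
have := sumset_dichotomy (principal_ideal_is_ideal z)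
          (invertible_outside_maximal Mmax Hnil) half HA'.
have hQ : 0 < Q by apply/lt_0_INR/ltP.
move=> /dichotomy_INR; rewrite INR_maxn.
have -> : INR #|Rg| = Rpower Q rr by rewrite Rpower_pow ?hR ?INR_expn.
have -> : INR #|principal_ideal z| = Rpower Q (rr - 1).
  by rewrite /rr -(prednK r0) S_INR Rplus_minus_r Rpower_pow ?hM ?INR_expn.
rewrite -/a -/s -/t => key; have ha : 0 < a.
  apply/lt_0_INR/ltP; apply: leq_trans HA'.
  by rewrite hM muln_gt0 expn_gt0 q0.
have hs : 0 <= s by apply: pos_INR.
split; [|split].
- exact: (bound_large hQ ha hs C0 C16 Cc1 hc1 key).
- by move=> _; apply: (bound_middle hQ ha hs C0 C16 Cc2 hc2 key).
- move=> lo up; apply: Rle_trans (Rmax_l s t).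
  exact: (bound_small hQ ha hs C0 Cc3 hc1 hc2 lo up).
Qed.
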